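(* Let $0<\rho<\mu$, let $\beta$ be the unique real with $\rho(\beta)=\rho$, let $\ell\in\mathbb{N}$ be such that $t=\ell\rho$ is an integer, and let $0<\varepsilon<1$. Let $X_\beta$ have distribution $P_\beta$ and set $$\delta=\ell^{1/2}\,\frac{\mathrm{Var}(\mathrm{wt}_{\mathcal{A}}(X_\beta))^{1/2}}{(1-\varepsilon)^{1/2}},$$ and assume $\delta>0$. Then $$\max_{\substack{j\in\mathbb{Z}\\ -\delta<j<\delta}}\frac{1}{\ell}\log_q\bigl|\mathcal{S}^\ell_{t+j}\bigr|\ \ge\ H_\rho-\frac{|\beta|\delta}{\ell}-\frac{1}{\ell}\log_q\!\left(\frac{2\lceil\delta\rceil-1}{\varepsilon}\right).$$ Moreover, for fixed $\rho$ and $\varepsilon$, the right-hand side converges to $H_\rho$ as $\ell\to\infty$ (along $\ell$ with $\ell\rho\in\mathbb{Z}$).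
   Context: Let $q>1$ be fixed. Let $\mathcal{A}$ be a finite abelian group with $|\mathcal{A}|\ge 2$ and $\mathrm{wt}_{\mathcal{A}}:\mathcal{A}\to\mathbb{Z}_{\ge 0}$ a weight function with $\mathrm{wt}_{\mathcal{A}}(a)=0$ iff $a=0$, extended additively to $\mathcal{A}^\ell$ by $\mathrm{wt}_{\Sigma\mathcal{A}}(v)=\sum_{i=1}^\ell\mathrm{wt}_{\mathcal{A}}(v_i)$. For an integer $s$, $\mathcal{S}^\ell_s=\{v\in\mathcal{A}^\ell:\mathrm{wt}_{\Sigma\mathcal{A}}(v)=s\}$. Let $\mu=\max_a\mathrm{wt}_{\mathcal{A}}(a)$. For $\beta\in\mathbb{R}$ let $P_\beta(a)=q^{-\beta\,\mathrm{wt}_{\mathcal{A}}(a)}/\mathcal{Z}(\beta)$, $\mathcal{Z}(\beta)=\sum_aq^{-\beta\,\mathrm{wt}_{\mathcal{A}}(a)}$, $\rho(\beta)=\sum_aP_\beta(a)\mathrm{wt}_{\mathcal{A}}(a)$; $\rho$ is a bijection $\mathbb{R}\to(0,\mu)$. For $\rho=\rho(\beta)$, $H_\rho=-\sum_{a:P_\beta(a)\ne0}P_\beta(a)\log_qP_\beta(a)$. Convention: $\log_q 0=-\infty$. *)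

From HB Require Import structures.
From mathcomp Require Import all_boot all_order all_algebra.
From mathcomp Require Import mathcomp_extra boolp classical_sets reals exp.
Set Implicit Arguments. Unset Strict Implicit. Unset Printing Implicit Defensive.
Import Order.TTheory GRing.Theory Num.Theory.
Local Open Scope ring_scope.

Section Defs.
Variables (R : realType) (A : finZmodType) (q : R) (wt : A -> nat).

Definition wtS (l : nat) (v : {ffun 'I_l -> A}) : nat := (\sum_(i < l) wt (v i))%N.

Definition Sl (l : nat) (s : int) : {set {ffun 'I_l -> A}} :=
  [set v | (wtS v)%:Z == s].

Definition mu : nat := (\max_(a : A) wt a)%N.

(* log base q; ln 0 is never used with positive weight since the statement
   only takes logarithms of positive quantities *)
Definition logq (x : R) : R := ln x / ln q.

Definition Zf (b : R) : R := \sum_(a : A) q `^ (- b * (wt a)%:R).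
Definition Pb (b : R) (a : A) : R := q `^ (- b * (wt a)%:R) / Zf b.
Definition rhof (b : R) : R := \sum_(a : A) Pb b a * (wt a)%:R.
(* H_rho for rho = rhof b *)
Definition Hrho (b : R) : R := - \sum_(a : A | Pb b a != 0) Pb b a * logq (Pb b a).
Definition Varwt (b : R) : R := \sum_(a : A) Pb b a * ((wt a)%:R - rhof b) ^+ 2.

Definition deltaf (b eps : R) (l : nat) : R :=
  Num.sqrt l%:R * Num.sqrt (Varwt b) / Num.sqrt (1 - eps).

Definition rhs (b eps : R) (l : nat) : R :=
  Hrho b - `|b| * deltaf b eps l / l%:R
  - logq ((2 * Num.ceil (deltaf b eps l) - 1)%:~R / eps) / l%:R.
End Defs.

From HB Require Import structures.
From mathcomp Require Import all_boot all_order all_algebra.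
From mathcomp Require Import mathcomp_extra boolp classical_sets reals exp.
From mathcomp Require Import ring lra zify.
Import Order.TTheory GRing.Theory Num.Theory.
Local Open Scope ring_scope.

(* Under the product measure P_beta^l a vector v has probability
   q^(-beta wt v) / Z^l, so the shell S_s carries mass |S_s| q^(-beta s) / Z^l.
   The weight of v is a sum of l independent copies of wt(X_beta), of mean rho
   and variance Var, so by Chebyshev at least eps of the mass lies within delta
   of t = l rho, i.e. on the 2 ceil(delta) - 1 shells S_(t+j), |j| < delta.
   One of them has mass at least eps / (2 ceil(delta) - 1); taking log_q and
   using H_rho = log_q Z + beta rho gives the bound.  As delta grows like
   sqrt l, both error terms are O(1 / sqrt l). *)

Section WeightedSums.
Context {R : realFieldType}.

Lemma sum_prod_sqr_sum (T : finType) (l : nat) (p f : T -> R) :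
  \sum_a p a = 1 -> \sum_a p a * f a = 0 ->
  \sum_(v : {ffun 'I_l -> T}) (\prod_i p (v i)) * (\sum_i f (v i)) ^+ 2
  = l%:R * \sum_a p a * f a ^+ 2.
Proof.
(* Expanding the square, each cross term factors over the coordinates and
   vanishes unless k = m, since f is centred. *)
move=> p1 pf0.
pose g (k m : 'I_l) (i : 'I_l) (a : T) :=
  p a * ((if i == k then f a else 1) * (if i == m then f a else 1)).
have cross k m :
    \sum_(v : {ffun 'I_l -> T}) (\prod_i p (v i)) * (f (v k) * f (v m))
    = \prod_i \sum_a g k m i a.
  rewrite bigA_distr_bigA /=; apply: eq_bigr => v _.
  have prod_if j : \prod_i (if i == j then f (v i) else 1) = f (v j).
    by rewrite -big_mkcond big_pred1_eq.
  by rewrite !big_split /= !prod_if.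
have gsum k m i : \sum_a g k m i a =
    if i == k then (if i == m then \sum_a p a * f a ^+ 2 else 0)
    else (if i == m then 0 else 1).
  rewrite /g; case: (i == k); case: (i == m);
    by under eq_bigr do rewrite ?mulr1 ?mul1r ?expr2.
have diag k m :
    \prod_i \sum_a g k m i a = if m == k then \sum_a p a * f a ^+ 2 else 0.
  rewrite (bigD1 k) //= gsum eqxx.
  case: (eqVneq k m) => [<-|_]; last by rewrite mul0r.
  rewrite [\prod_(i | _) _]big1 ?mulr1 // => i /negbTE ik.
  by rewrite gsum ik.
transitivity (\sum_(k < l) \sum_(m < l) if m == k then \sum_a p a * f a ^+ 2 else 0).
  under eq_bigr do rewrite expr2 big_distrlr mulr_sumr; rewrite exchange_big.
  apply: eq_bigr => k _; under eq_bigr do rewrite mulr_sumr; rewrite exchange_big.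
  by apply: eq_bigr => m _; rewrite cross diag.
under eq_bigr do rewrite -big_mkcond big_pred1_eq.
by rewrite sumr_const card_ord mulr_natl.
Qed.

Lemma chebyshev_sum (T : finType) (w g : T -> R) (d : R) :
  (forall v, 0 <= w v) -> 0 <= d ->
  d ^+ 2 * \sum_(v | d <= `|g v|) w v <= \sum_v w v * g v ^+ 2.
Proof.
move=> w0 d0; rewrite mulr_sumr [X in _ <= X](bigID (fun v => d <= `|g v|)) /=.
rewrite -[X in X <= _]addr0 lerD //; last first.
  by apply: sumr_ge0 => v _; rewrite mulr_ge0 ?sqr_ge0.
apply: ler_sum => v dg; rewrite mulrC ler_wpM2l //.
by rewrite -[X in _ <= X]real_normK ?num_real // !expr2; apply: ler_pM.
Qed.

Lemma exists_ge_mean (n : nat) (x : 'I_n -> R) (c : R) :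
  (0 < n)%N -> c <= \sum_k x k -> exists k, c / n%:R <= x k.
Proof.
move=> n0 cx.
case: (boolP [exists k, c / n%:R <= x k]) => [/existsP //|/existsPn lt].
suff : \sum_k x k < \sum_(k < n) c / n%:R.
  rewrite sumr_const card_ord -[_ / _ *+ n]mulr_natr divfK ?pnatr_eq0 -?lt0n //.
  by rewrite ltNge cx.
apply: ltr_sum => [|k _]; last by rewrite ltNge lt.
by apply/hasP; exists (Ordinal n0); rewrite ?mem_index_enum.
Qed.

Lemma ler_sum_window (T : finType) (w : T -> R) (key : T -> int) (P : pred T)
    (a : int) (n : nat) :
  (forall v, 0 <= w v) -> (forall v, P v -> a <= key v < a + n%:Z) ->
  \sum_(v | P v) w v <= \sum_(k < n) \sum_(v | key v == a + k%:Z) w v.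
Proof.
move=> w0; case: n => [|n] win.
  by rewrite big_ord0 big_pred0 // => v; apply/negP => /win; lia.
rewrite (partition_big (fun v => inord `|key v - a|%N : 'I_n.+1) xpredT) //=.
apply: ler_sum => k _; rewrite [X in X <= _]big_mkcond [X in _ <= X]big_mkcond /=.
apply: ler_sum => v _; case: ifP => [/andP[/win vwin /eqP <-]|_]; last by case: ifP.
suff -> : key v == a + (inord `|key v - a|%N : 'I_n.+1)%:Z by [].
by rewrite inordK; lia.
Qed.
End WeightedSums.

Section Logarithm.
Context {R : realType} {q : R}.
Hypothesis hq : 1 < q.

Let q_gt0 : 0 < q. Proof. exact: lt_trans hq. Qed.
Let lnq_gt0 : 0 < ln q. Proof. exact: ln_gt0. Qed.

Lemma logq_powR x : logq q (q `^ x) = x.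
Proof. by rewrite /logq ln_powR mulfK // gt_eqF. Qed.

Lemma logqM x y : 0 < x -> 0 < y -> logq q (x * y) = logq q x + logq q y.
Proof. by move=> x0 y0; rewrite /logq lnM ?posrE // mulrDl. Qed.

Lemma logqV x : 0 < x -> logq q x^-1 = - logq q x.
Proof. by move=> x0; rewrite /logq lnV ?posrE // mulNr. Qed.

Lemma logqXn n x : 0 < x -> logq q (x ^+ n) = n%:R * logq q x.
Proof. by move=> x0; rewrite /logq lnXn // -[ln x *+ n]mulr_natl mulrA. Qed.

Lemma ler_logq {x y} : 0 < x -> x <= y -> logq q x <= logq q y.
Proof.
move=> x0 xy; rewrite /logq ler_pM2r ?invr_gt0 // ler_ln ?posrE //.
exact: lt_le_trans xy.
Qed.

Lemma ler_logq_mul_powR {x y z u n} : 0 < x -> 0 < z ->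
  x <= y * (q `^ u / z ^+ n) -> logq q x - u + n%:R * logq q z <= logq q y.
Proof.
move=> x0 z0 xy.
have w0 : 0 < q `^ u / z ^+ n by rewrite divr_gt0 ?powR_gt0 ?exprn_gt0.
have y0 : 0 < y by move: (lt_le_trans x0 xy); rewrite pmulr_lgt0.
have := ler_logq x0 xy.
rewrite logqM // logqM ?powR_gt0 ?invr_gt0 ?exprn_gt0 // logqV ?exprn_gt0 //.
by rewrite logq_powR logqXn //; lra.
Qed.

End Logarithm.

Lemma ln_ceil_window {R : realType} (x e : R) : 0 <= x -> 0 < e -> e < 1 ->
  0 <= ln ((2 * Num.ceil x - 1)%:~R / e) <= (2 * x + 1) / e.
Proof.
(* For x = 0 the argument of ln is -1/e, where ln takes its junk value 0. *)
move=> x0 e0 e1; have [<-|xpos] := eqVneq 0 x.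
  rewrite ceil0 mulr0 sub0r ln0 ?lexx ?divr_ge0 ?ltW //=; last first.
    by rewrite pmulr_llt0 ?invr_gt0 // ltrz0.
  lra.
have c0 : 0 < Num.ceil x by rewrite ceil_gt0 lt0r eq_sym xpos.
have n1 : 1 <= (2 * Num.ceil x - 1)%:~R :> R.
  by rewrite ler1z; move: c0; set c := Num.ceil x; lia.
have ne1 : 1 <= (2 * Num.ceil x - 1)%:~R / e.
  by rewrite ler_pdivlMr // mul1r (le_trans (ltW e1)).
rewrite ln_ge0 //=; apply: (le_trans (ltW (ln_sublinear (lt_le_trans ltr01 ne1)))).
rewrite ler_pM2r ?invr_gt0 //; have := ceilB1_lt x; rewrite !intrB intrM.
lra.
Qed.

Section GibbsDistribution.
Context {R : realType} {A : finZmodType}.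
Variables (q : R) (wt : A -> nat).
Hypothesis hq : 1 < q.
Variable b : R.

Local Notation Z := (Zf q wt b).
Local Notation P := (Pb q wt b).
Local Notation rho := (rhof q wt b).

Let q_gt0 : 0 < q. Proof. exact: lt_trans hq. Qed.

Lemma Zf_gt0 : 0 < Z.
Proof.
rewrite /Zf (bigD1 0) //= ltr_wpDr ?powR_gt0 //.
by apply: sumr_ge0 => a _; exact: powR_ge0.
Qed.

Lemma Pb_gt0 a : 0 < P a.
Proof. by rewrite /Pb divr_gt0 ?Zf_gt0 ?powR_gt0. Qed.

Lemma sum_Pb : \sum_a P a = 1.
Proof. by rewrite /Pb -mulr_suml mulfV // gt_eqF // Zf_gt0. Qed.

Lemma Varwt_ge0 : 0 <= Varwt q wt b.
Proof. by apply: sumr_ge0 => a _; rewrite mulr_ge0 ?sqr_ge0 ?ltW ?Pb_gt0. Qed.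

Lemma HrhoE : Hrho q wt b = logq q Z + b * rho.
Proof.
have logqP a : logq q (P a) = - b * (wt a)%:R - logq q Z.
  by rewrite /Pb logqM ?invr_gt0 ?Zf_gt0 ?powR_gt0 // logqV ?Zf_gt0 // logq_powR.
rewrite /Hrho (eq_bigl xpredT) => [|a]; last by rewrite /= gt_eqF ?Pb_gt0.
under eq_bigr do rewrite logqP mulrBr mulrCA.
by rewrite sumrB -mulr_sumr -mulr_suml sum_Pb /rhof; ring.
Qed.

Definition Pvec {l : nat} (v : {ffun 'I_l -> A}) : R := \prod_i P (v i).

Lemma Pvec_ge0 l (v : {ffun 'I_l -> A}) : 0 <= Pvec v.
Proof. by apply: prodr_ge0 => i _; rewrite ltW ?Pb_gt0. Qed.

Lemma sum_Pvec l : \sum_(v : {ffun 'I_l -> A}) Pvec v = 1.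
Proof.
rewrite /Pvec -(bigA_distr_bigA (fun (_ : 'I_l) a => P a)).
by rewrite big1 // => i _; exact: sum_Pb.
Qed.

Lemma PvecE l (v : {ffun 'I_l -> A}) :
  Pvec v = q `^ (- b * (wtS wt v)%:R) / Z ^+ l.
Proof.
have powRD_morph : {morph powR q : x y / x + y >-> x * y}.
  by move=> x y; rewrite powRD // (gt_eqF q_gt0) implybT.
rewrite /Pvec /Pb /wtS natr_sum mulr_sumr big_split /= prodr_const card_ord exprVn.
by rewrite -(big_morph _ powRD_morph (powRr0 q)).
Qed.

Lemma sum_Pvec_Sl l (s : int) :
  \sum_(v in Sl wt l s) Pvec v = #|Sl wt l s|%:R * (q `^ (- b * s%:~R) / Z ^+ l).
Proof.
rewrite mulr_natl -sumr_const; apply: eq_bigr => v; rewrite inE => /eqP <-.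
by rewrite PvecE.
Qed.

Lemma Pvec_wtS_var l :
  \sum_(v : {ffun 'I_l -> A}) Pvec v * ((wtS wt v)%:R - l%:R * rho) ^+ 2
  = l%:R * Varwt q wt b.
Proof.
have centered (v : {ffun 'I_l -> A}) :
    (wtS wt v)%:R - l%:R * rho = \sum_i ((wt (v i))%:R - rho).
  by rewrite /wtS natr_sum sumrB sumr_const card_ord mulr_natl.
under eq_bigr do rewrite centered.
apply: sum_prod_sqr_sum; first exact: sum_Pb.
by under eq_bigr do rewrite mulrBr; rewrite sumrB -mulr_suml sum_Pb mul1r subrr.
Qed.

Lemma Pvec_concentration l (d : R) : 0 < d ->
  1 - l%:R * Varwt q wt b / d ^+ 2
  <= \sum_(v : {ffun 'I_l -> A} | `|(wtS wt v)%:R - l%:R * rho| < d) Pvec v.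
Proof.
move=> d0; set dev := fun v : {ffun 'I_l -> A} => (wtS wt v)%:R - l%:R * rho.
have := @chebyshev_sum _ _ Pvec dev d (Pvec_ge0 l) (ltW d0).
rewrite Pvec_wtS_var mulrC -ler_pdivlMr ?exprn_gt0 // => far.
have := sum_Pvec l; rewrite (bigID (fun v => d <= `|dev v|)) /=.
under [X in _ + X]eq_bigl do rewrite -ltNge.
lra.
Qed.

Lemma exists_heavy_shell {l} {t : int} {d : R} : t%:~R = l%:R * rho -> 0 < d ->
  exists2 j : int, `|j| < Num.ceil d &
    (1 - l%:R * Varwt q wt b / d ^+ 2) / (2 * Num.ceil d - 1)%:~R
    <= #|Sl wt l (t + j)|%:R * (q `^ (- b * (t + j)%:~R) / Z ^+ l).
Proof.
move=> ht d0; set c := Num.ceil d; have c0 : 0 < c by rewrite ceil_gt0.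
pose n := absz (2 * c - 1)%R; have nE : n%:Z = 2 * c - 1 by lia.
have [k] : exists k : 'I_n, (1 - l%:R * Varwt q wt b / d ^+ 2) / n%:R
    <= \sum_(v : {ffun 'I_l -> A} | (wtS wt v)%:Z == t - c + 1 + k%:Z) Pvec v.
  apply: exists_ge_mean; first lia.
  apply: le_trans (Pvec_concentration l _ d0) _.
  apply: (@ler_sum_window _ _ _ (fun v => (wtS wt v)%:Z)) => v.
    exact: Pvec_ge0.
  rewrite -ht (_ : (wtS wt v)%:R = (wtS wt v)%:Z%:~R) //.
  by rewrite -intrB -intr_norm -ceil_gt_int -/c; lia.
have kn := ltn_ord k; exists (k%:Z - c + 1); first lia.
rewrite -sum_Pvec_Sl // (_ : t + _ = t - c + 1 + k%:Z); last by ring.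
by rewrite -nE; under eq_bigl do rewrite inE.
Qed.

Variable eps : R.
Hypotheses (eps_gt0 : 0 < eps) (eps_lt1 : eps < 1).

Local Notation d := (deltaf q wt b eps).

Lemma deltaf_sqr l : d l ^+ 2 * (1 - eps) = l%:R * Varwt q wt b.
Proof.
rewrite /deltaf expr_div_n exprMn !sqr_sqrtr ?Varwt_ge0 ?subr_ge0 ?ler0n ?ltW //.
by rewrite divfK // subr_eq0 gt_eqF.
Qed.

Lemma deltaf_gt0_lt0n l : 0 < d l -> (0 < l)%N.
Proof. by case: l => // ; rewrite /deltaf sqrtr0 !mul0r ltxx. Qed.

Lemma rhs_le_logq_card l (t : int) : t%:~R = l%:R * rho -> 0 < d l ->
  exists j : int, - d l < j%:~R < d l /\ (0 < #|Sl wt l (t + j)|)%N /\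
    rhs q wt b eps l <= logq q #|Sl wt l (t + j)|%:R / l%:R.
Proof.
move=> ht d0; have l0 : (0 : R) < l%:R by rewrite ltr0n deltaf_gt0_lt0n.
have [j jc] := exists_heavy_shell ht d0.
rewrite -(deltaf_sqr l) mulrAC divff ?mul1r ?expf_neq0 ?gt_eqF //.
rewrite (_ : 1 - (1 - eps) = eps); last by ring.
set n : R := (2 * Num.ceil (d l) - 1)%:~R => heavy.
have c0 : 0 < Num.ceil (d l) by rewrite ceil_gt0.
have n0 : 0 < n by rewrite /n ltr0z; move: c0; set c := Num.ceil _; lia.
have jd : `|j%:~R| < d l by rewrite -intr_norm -ceil_gt_int.
have := ler_logq_mul_powR hq (divr_gt0 eps_gt0 n0) Zf_gt0 heavy.
rewrite -invf_div logqV ?divr_gt0 // intrD mulrDr ht opprD mulNr opprK => logS.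
exists j; split; first by rewrite -ltr_norml.
split.
  have := lt_le_trans (divr_gt0 eps_gt0 n0) heavy.
  by rewrite pmulr_lgt0 ?ltr0n // divr_gt0 ?powR_gt0 ?exprn_gt0 ?Zf_gt0.
have bj : - (`|b| * d l) <= b * j%:~R.
  have : `|b * j%:~R| <= `|b| * d l.
    by rewrite normrM; apply: ler_wpM2l => //; exact: ltW.
  by rewrite ler_norml => /andP[].
rewrite /rhs HrhoE -/n ler_pdivlMr // !mulrBl mulrDl !divfK ?gt_eqF //.
lra.
Qed.

Local Notation C := (Num.sqrt (Varwt q wt b) / Num.sqrt (1 - eps)).

Lemma Hrho_sub_rhs_bounds l : (0 < l)%N ->
  0 <= Hrho q wt b - rhs q wt b eps l
    <= (`|b| * C + (2 * C + 1) / (eps * ln q)) / Num.sqrt l%:R.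
Proof.
move=> l0; set s := Num.sqrt l%:R.
have s1 : 1 <= s by rewrite -sqrtr1 ler_sqrt // ler1n.
have s0 : 0 < s by apply: lt_le_trans s1.
have ls : l%:R = s ^+ 2 by rewrite sqr_sqrtr ?ler0n.
have dE : d l = s * C by rewrite /deltaf mulrA.
have C0 : 0 <= C by rewrite divr_ge0 ?sqrtr_ge0.
clearbody s.
have lnq0 : 0 < ln q by apply: ln_gt0.
have /andP[X0 Xle] :=
  ln_ceil_window (s * C) eps (mulr_ge0 (ltW s0) C0) eps_gt0 eps_lt1.
set X := ln _ in X0 Xle.
have -> : Hrho q wt b - rhs q wt b eps l = (`|b| * C + X / (ln q * s)) / s.
  by rewrite /rhs /logq dE ls -/X; field; rewrite !gt_eqF ?sqrtr_gt0 ?subr_gt0.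
have Xs0 : 0 <= X / (ln q * s) by rewrite divr_ge0 // mulr_ge0 // ltW.
rewrite divr_ge0 ?addr_ge0 ?(ltW s0) //=; last exact: mulr_ge0.
rewrite ler_pM2r ?invr_gt0 // lerD2l ler_pdivrMr ?mulr_gt0 //.
have -> : (2 * C + 1) / (eps * ln q) * (ln q * s) = (2 * C + 1) * s / eps.
  by field; rewrite !gt_eqF ?sqrtr_gt0 ?subr_gt0.
apply: le_trans Xle _; rewrite ler_pM2r ?invr_gt0 //.
nra.
Qed.

Lemma rhs_cvg e : 0 < e ->
  exists N : nat, forall l, (N <= l)%N -> `|rhs q wt b eps l - Hrho q wt b| < e.
Proof.
move=> e0; set K := `|b| * C + (2 * C + 1) / (eps * ln q).
have C0 : 0 <= C by rewrite divr_ge0 ?sqrtr_ge0.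
have K0 : 0 <= K / e.
  apply: divr_ge0 (ltW e0); apply: addr_ge0; first exact: mulr_ge0.
  by apply: divr_ge0; [lra | rewrite mulr_ge0 // ltW ?ln_gt0].
exists (Num.Def.archi_bound ((K / e) ^+ 2)).+1 => l lN.
have l0 : (0 < l)%N by apply: leq_trans lN.
have /andP[gap0 gapK] := Hrho_sub_rhs_bounds l l0.
have sl : K / e < Num.sqrt l%:R.
  rewrite -[K / e]ger0_norm // -sqrtr_sqr ltr_sqrt ?ltr0n //.
  apply: lt_le_trans (archi_boundP (sqr_ge0 _)) _.
  by rewrite ler_nat ltnW.
rewrite distrC ger0_norm //; apply: le_lt_trans gapK _.
rewrite -/K ltr_pdivrMr ?sqrtr_gt0 ?ltr0n //.
by rewrite mulrC -ltr_pdivrMr.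
Qed.

End GibbsDistribution.

Theorem mainTheorem8 (R : realType) (A : finZmodType) (q : R) (wt : A -> nat)
  (hq : 1 < q) (hA : (2 <= #|A|)%N) (hwt : forall a : A, wt a = 0%N <-> a = 0)
  (rho beta eps : R) (hrho0 : 0 < rho) (hrhomu : rho < (mu wt)%:R)
  (hbeta : rhof q wt beta = rho) (heps0 : 0 < eps) (heps1 : eps < 1) :
  (forall (l : nat) (t : int), t%:~R = l%:R * rho ->
     0 < deltaf q wt beta eps l ->
     exists j : int,
       - deltaf q wt beta eps l < j%:~R < deltaf q wt beta eps l /\
       (0 < #|Sl wt l (t + j)|)%N /\
       rhs q wt beta eps l <= logq q (#|Sl wt l (t + j)|)%:R / l%:R)
  /\
  (forall e : R, 0 < e -> exists N : nat, forall l : nat, (N <= l)%N ->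
     (exists t : int, t%:~R = l%:R * rho) ->
     `|rhs q wt beta eps l - Hrho q wt beta| < e).
Proof.
rewrite -hbeta; split; first exact: rhs_le_logq_card.
move=> e e0; have [N HN] := rhs_cvg q wt hq beta eps heps0 heps1 e e0.
by exists N => l lN _; exact: HN.
Qed.
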